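(* Let $S$ and $T$ be Polish spaces, $\Delta_\infty=\{(w_j)_{j\ge1}:w_j\ge0,\ \sum_jw_j=1\}$, and let $G$ be a probability kernel from $S$ into $T$ such that $G(\cdot\mid s_n)\to G(\cdot\mid s)$ weakly whenever $s_n\to s$ in $S$. Then the mapping $[(s_1,s_2,\dots),(w_1,w_2,\dots)]\mapsto\sum_{j\ge1}w_jG(\cdot\mid s_j)$ from $S^\infty\times\Delta_\infty$ (product topology) into the space $\mathcal{P}(T)$ of probability measures on $T$ (weak topology) is continuous. *)

From HB Require Import structures.
From mathcomp Require Import all_boot all_order all_algebra.
From mathcomp Require Import all_classical all_reals all_analysis.
Set Implicit Arguments. Unset Strict Implicit. Unset Printing Implicit Defensive.
Import Order.TTheory GRing.Theory Num.Theory.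
Import numFieldNormedType.Exports.
Local Open Scope classical_set_scope.
Local Open Scope ring_scope.

Definition separable_space (T : topologicalType) : Prop :=
  exists D : set T, countable D /\ closure D = setT.

Definition completely_metrizable (R : realType) (T : topologicalType) : Prop :=
  exists dist : T -> T -> R,
    [/\ (forall x y, dist x y = 0 <-> x = y),
        (forall x y, dist x y = dist y x),
        (forall x y z, dist x z <= dist x y + dist y z),
        (forall x, nbhs x = filter_from [set e : R | 0 < e]
                                        (fun e => [set y | dist x y < e])) &
        (forall u : nat -> T,
            (forall e : R, 0 < e -> exists N : nat, forall m n : nat,
                 (N <= m)%N -> (N <= n)%N -> dist (u m) (u n) < e) ->
            exists x : T, u @ \oo --> x)].

Definition polish (R : realType) (T : topologicalType) : Prop :=
  separable_space T /\ completely_metrizable R T.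

Definition Borel (T : ptopologicalType) : measurableType _ := g_sigma_algebraType (@open T).

Definition simplex_inf (R : realType) : set (nat -> R) :=
  [set w : nat -> R | (forall j, 0 <= w j) /\ (fun n : nat => \sum_(j < n) w j) @ \oo --> (1 : R)].

Definition mixture (R : realType) (S T : ptopologicalType)
  (G : R.-pker (Borel S) ~> (Borel T)) (p : (nat -> S) * (nat -> R))
  : set (Borel T) -> \bar R :=
  fun B => (\sum_(0 <= j <oo) ((p.2 j)%:E * G (p.1 j) B))%E.

Definition bounded_continuous (R : realType) (T : topologicalType) (f : T -> R) :=
  continuous f /\ exists M : R, forall x, `|f x| <= M.

From HB Require Import structures.
From mathcomp Require Import all_boot all_order all_algebra.
From mathcomp Require Import all_classical all_reals all_analysis.
From mathcomp Require Import lra measurable_realfun.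
Set Implicit Arguments.
Unset Strict Implicit.
Unset Printing Implicit Defensive.

Import Order.TTheory GRing.Theory Num.Theory.
Import numFieldNormedType.Exports.
Local Open Scope classical_set_scope.
Local Open Scope ring_scope.

(* The integral of f against the mixture is the series sum_j w_j h(s_j), where
   h(s) = int f dG(s) is bounded by sup |f| and continuous: the kernel is weakly
   continuous along sequences, and sequential continuity suffices on the
   metrizable space S.  As the weights sum to 1, the terms of index >= N
   contribute at most sup |f| (1 - w_0 - ... - w_(N-1)), which is small
   uniformly near any point of the simplex, while the first N terms depend
   continuously on (s, w) in the product topology. *)

Section dominated_series.
Variables (R : realType) (c w : R^nat) (M : R).
Hypotheses (c_le : forall n, `|c n| <= M * w n) (w_cvg : cvgn (series w)).

Lemma dominated_series_cvg : cvgn (series c).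
Proof.
apply: normed_cvg; apply: (@series_le_cvg _ _ (M *: w)) => [n|n|n|].
- exact: normr_ge0.
- exact: le_trans (c_le n).
- exact: c_le.
- exact: is_cvg_seriesZ.
Qed.

Lemma dominated_series_tail N :
  `|limn (series c) - series c N| <= M * (limn (series w) - series w N).
Proof.
have c_cvg := dominated_series_cvg.
suff tail (s : R) : `|s| <= 1 ->
    s * (limn (series c) - series c N) <= M * (limn (series w) - series w N).
  have := tail 1; have := tail (-1); rewrite normrN1 normr1 lexx.
  rewrite ler_norml => /(_ isT) ? /(_ isT) ?; apply/andP; split; lra.
move=> s1; pose D n := M * series w n - s * series c n.
have D_nd : nondecreasing_seq D.
  apply/nondecreasing_seqP => n.
  rewrite /D !seriesSr mulrDr mulrDr opprD addrACA.
  rewrite lerDl subr_ge0 (le_trans (ler_norm _)) // normrM.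
  by rewrite (le_trans _ (c_le n)) // ler_piMl.
have D_cvg : D @ \oo --> M * limn (series w) - s * limn (series c).
  by apply: cvgB; apply: cvgM => //; exact: cvg_cst.
have := nondecreasing_cvgn_le D_nd (cvgP _ D_cvg) N.
rewrite (cvg_lim _ D_cvg) // /D => ?; lra.
Qed.

End dominated_series.

Lemma continuous_fst_ptws_coord (I : eqType) (X Y : topologicalType) (i : I) :
  continuous (fun p : {ptws I -> X} * Y => p.1 i).
Proof.
move=> p; apply: (@cvg_comp _ _ _ fst (fun g => g i) _ (nbhs p.1)).
  exact: cvg_fst.
exact: (@proj_continuous I (fun=> X) i p.1).
Qed.

Lemma continuous_snd_ptws_coord (I : eqType) (X Y : topologicalType) (i : I) :
  continuous (fun p : Y * {ptws I -> X} => p.2 i).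
Proof.
move=> p; apply: (@cvg_comp _ _ _ snd (fun g => g i) _ (nbhs p.2)).
  exact: cvg_snd.
exact: (@proj_continuous I (fun=> X) i p.2).
Qed.

Section mixture_mean.
Variables (R : realType) (S : topologicalType).

Definition mixture_mean (h : S -> R) (p : (nat -> S) * (nat -> R)) : R :=
  limn (series (fun j => p.2 j * h (p.1 j))).

Lemma simplex_series_cvg (w : nat -> R) :
  simplex_inf w -> series w @ \oo --> (1 : R).
Proof. by case=> _; rewrite seriesEord. Qed.

Section bounded_weights.
Variables (h : S -> R) (M : R).
Hypothesis h_le : forall s, `|h s| <= M.

Lemma mixture_term_le (p : (nat -> S) * (nat -> R)) j : 0 <= p.2 j ->
  `|p.2 j * h (p.1 j)| <= M * p.2 j.
Proof. by move=> w0; rewrite normrM ger0_norm // mulrC ler_wpM2r. Qed.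

Lemma mixture_series_cvg (p : (nat -> S) * (nat -> R)) :
  (forall j, 0 <= p.2 j) -> cvgn (series p.2) ->
  cvgn (series (fun j => p.2 j * h (p.1 j))).
Proof.
by move=> w0; apply: dominated_series_cvg => j; exact: mixture_term_le.
Qed.

Lemma mixture_mean_tail (p : (nat -> S) * (nat -> R)) N : simplex_inf p.2 ->
  `|mixture_mean h p - series (fun j => p.2 j * h (p.1 j)) N|
    <= M * (1 - series p.2 N).
Proof.
move=> wp; have [w0 _] := wp.
rewrite -(cvg_lim _ (simplex_series_cvg wp)) //.
apply: dominated_series_tail (cvgP _ (simplex_series_cvg wp)) _ => j.
exact: mixture_term_le.
Qed.

End bounded_weights.

Lemma continuous_mixture_partial_sum (h : S -> R) N : continuous h ->
  continuous (fun p : {ptws nat -> S} * {ptws nat -> R} =>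
                series (fun j => p.2 j * h (p.1 j)) N).
Proof.
move=> h_cont.
have add_cont : continuous (fun x : R * R => x.1 + x.2).
  exact: add_continuous.
apply: (@continuous_big R nat +%R 0 xpredT add_cont _ (index_iota 0 N)
    (fun j (p : {ptws nat -> S} * {ptws nat -> R}) => p.2 j * h (p.1 j)))
  => j _ p.
apply: (@continuousM R _ (fun p : {ptws nat -> S} * {ptws nat -> R} => p.2 j)
  (fun p => h (p.1 j))).
  exact: continuous_snd_ptws_coord.
apply: (@continuous_comp _ _ _
  (fun p : {ptws nat -> S} * {ptws nat -> R} => p.1 j) h p _ (h_cont _)).
exact: continuous_fst_ptws_coord.
Qed.

Lemma continuous_mixture_mean (h : S -> R) (M : R) :
  continuous h -> (forall s, `|h s| <= M) ->
  {within [set p : {ptws nat -> S} * {ptws nat -> R} | simplex_inf p.2],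
    continuous (mixture_mean h)}.
Proof.
move=> h_cont h_le; apply/subspace_continuousP => p0 p0w.
have M0 : 0 <= M := le_trans (normr_ge0 _) (h_le (p0.1 0%N)).
apply/cvgrPdist_lt => e e0.
(* |mixture_mean h p0 - mixture_mean h p| is bounded by the tail at p0 (<= M d),
   the tail at p (<= 2 M d) and the change of the first N terms (< d). *)
pose d := e / (3 * M + 1).
have d0 : 0 < d by rewrite divr_gt0 //; lra.
have de : d * (3 * M + 1) = e by rewrite /d mulrVK // unitfE; lra.
have /cvgrPdist_lt/(_ d d0) [N _ /(_ N (leqnn N)) W0N] :=
  simplex_series_cvg p0w.
have /cvgrPdist_lt/(_ d d0) W_near := continuous_mixture_partial_sum (N := N)
  (@cst_continuous _ _ (1 : R)) (x := p0).
have /cvgrPdist_lt/(_ d d0) A_near :=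
  continuous_mixture_partial_sum (N := N) h_cont (x := p0).
have W_series (q : (nat -> S) * (nat -> R)) :
    series (fun j => q.2 j * cst 1 (q.1 j)) N = series q.2 N.
  by congr series; apply/funext => j; rewrite mulr1.
rewrite near_withinE; near=> p => pw.
have W0p : `|series p0.2 N - series p.2 N| < d.
  by rewrite -!W_series; near: p; exact: W_near.
have A0p : `|series (fun j => p0.2 j * h (p0.1 j)) N
             - series (fun j => p.2 j * h (p.1 j)) N| < d.
  by near: p; exact: A_near.
move: W0N W0p A0p (mixture_mean_tail h_le N p0w) (mixture_mean_tail h_le N pw).
rewrite !ltr_norml !ler_norml.
move=> /andP[? ?] /andP[? ?] /andP[? ?] /andP[? ?] /andP[? ?].
have : M * (1 - series p0.2 N) <= M * d by rewrite ler_wpM2l //; lra.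
have : M * (1 - series p.2 N) <= M * (2 * d) by rewrite ler_wpM2l //; lra.
move=> ? ?; rewrite /from_subspace /=; apply/andP; split; lra.
Unshelve. all: by end_near.
Qed.

End mixture_mean.

Lemma sequentially_continuous_metric (R : realType) (S Y : topologicalType)
    (dist : S -> S -> R) (h : S -> Y) :
  (forall x, nbhs x = filter_from [set e : R | 0 < e]
                                  (fun e => [set y | dist x y < e])) ->
  (forall (u : nat -> S) s, u @ \oo --> s -> h \o u @ \oo --> h s) ->
  continuous h.
Proof.
move=> nbhsE h_seq s V hV; apply: contrapT => not_near.
have far n : exists t, dist s t < n.+1%:R^-1 /\ ~ V (h t).
  apply: contrapT => /forallNP far; apply: not_near; rewrite nbhsE.
  exists n.+1%:R^-1 => //= t st; apply: contrapT => Vt.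
  exact: (far t).
have [u u_far] := choice far.
have u_s : u @ \oo --> s.
  move=> Q; rewrite /= nbhsE => -[r r0 rQ].
  apply: filterS (near_infty_natSinv_lt (PosNum r0)) => n /= nr.
  exact/rQ/(lt_trans (u_far n).1).
have [N _ /(_ N (leqnn N)) VN] := h_seq u s u_s V hV.
exact: (u_far N).2.
Qed.

Lemma continuous_Borel_measurable (R : realType) (T : ptopologicalType)
    (f : Borel T -> R) :
  continuous (f : T -> R) -> measurable_fun setT f.
Proof.
move=> f_cont; apply: (measurability _ (RGenOpens.measurableE R)).
move=> _ [_ [a [b ->] <-]]; apply: sub_sigma_algebra.
by rewrite setTI; apply: (continuousP _).1 f_cont _ (interval_open _ _).
Qed.

Section probability_integral.
Context d (X : measurableType d) (R : realType).
Variable mu : {measure set X -> \bar R}.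
Hypothesis mu1 : mu setT = 1%E.
Variables (f : X -> R) (M : R).
Hypotheses (mf : measurable_fun setT f) (f_le : forall x, `|f x| <= M).

Lemma bounded_prob_integrable : mu.-integrable setT (EFin \o f).
Proof.
apply: measurable_bounded_integrable => //; first by rewrite mu1 ltry.
exists M; split; first exact: num_real.
by move=> r Mr x _; rewrite /= (le_trans (f_le x)) // ltW.
Qed.

Lemma EFin_Rintegral_prob : (\int[mu]_x f x)%:E = (\int[mu]_x (f x)%:E)%E.
Proof.
by rewrite fineK //; exact: integrable_fin_num bounded_prob_integrable.
Qed.

Lemma normr_Rintegral_prob_le : `|\int[mu]_x f x| <= M.
Proof.
have mEf : measurable_fun setT (EFin \o f) by exact/measurable_EFinP.
have M0 : (0 <= M%:E)%E.
  have [x _] : [set: X] !=set0.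
    apply/set0P/negP => /eqP X0; move: mu1; rewrite X0 measure0 => -[] /eqP.
    by rewrite eq_sym oner_eq0.
  by rewrite lee_fin (le_trans _ (f_le x)).
rewrite -lee_fin EFin_normr_Rintegral //; last exact: bounded_prob_integrable.
apply: (le_trans (le_abse_integral mu measurableT mEf)).
apply: le_trans (integral_le_bound M%:E _ mEf _ _) _ => //.
  by apply: aeW => x _; rewrite /= lee_fin.
by rewrite mu1 mule1.
Qed.

End probability_integral.

Lemma funrpos_le_norm (T : Type) (R : realDomainType) (f : T -> R) x :
  `|f^\+ x| <= `|f x|.
Proof. by rewrite ger0_norm ?funrpos_ge0 // ge_max ler_norm normr_ge0. Qed.

Lemma funrneg_le_norm (T : Type) (R : realDomainType) (f : T -> R) x :
  `|f^\- x| <= `|f x|.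
Proof. by rewrite -funrposN (le_trans (funrpos_le_norm _ _)) //= normrN. Qed.

Section mixture_integral.
Variables (R : realType) (S T : ptopologicalType).
Variable G : R.-pker (Borel S) ~> (Borel T).
Variable p : (nat -> S) * (nat -> R).
Hypotheses (w0 : forall j, 0 <= p.2 j) (w_cvg : cvgn (series p.2)).

Lemma mixtureE :
  mixture G p = mseries (fun j => mscale (NngNum (w0 j)) (G (p.1 j))) 0.
Proof. by apply/funext. Qed.

Lemma ge0_integral_mixture (g : Borel T -> \bar R) :
  measurable_fun setT g -> (forall x, 0 <= g x)%E ->
  (\int[mixture G p]_x g x = \sum_(j <oo) (p.2 j)%:E * \int[G (p.1 j)]_x g x)%E.
Proof.
move=> mg g0; rewrite mixtureE ge0_integral_measure_series //.
by apply: eq_eseriesr => j _; rewrite ge0_integral_mscale.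
Qed.

Lemma ge0_integral_mixture_bounded (f : Borel T -> R) (M : R) :
  measurable_fun setT f -> (forall x, `|f x| <= M) -> (forall x, 0 <= f x) ->
  (\int[mixture G p]_x (f x)%:E)%E
    = (mixture_mean (fun s => \int[G s]_x f x) p)%:E.
Proof.
move=> mf f_le f0.
rewrite ge0_integral_mixture //; last exact/measurable_EFinP.
have h_le (s : S) : `|\int[G s]_x f x| <= M :=
  normr_Rintegral_prob_le (prob_kernel (s := G) s) mf f_le.
have h_cvg := mixture_series_cvg h_le w0 w_cvg.
rewrite /mixture_mean -EFin_lim //.
congr (limn _); apply/funext => n /=; rewrite seriesEnat /= -sumEFin.
apply: eq_bigr => j _.
by rewrite EFinM (EFin_Rintegral_prob (prob_kernel _) mf f_le).
Qed.

Lemma integral_mixture (f : Borel T -> R) (M : R) :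
  measurable_fun setT f -> (forall x, `|f x| <= M) ->
  (\int[mixture G p]_x (f x)%:E)%E
    = (mixture_mean (fun s => \int[G s]_x f x) p)%:E.
Proof.
move=> mf f_le.
have mfp := measurable_funrpos mf; have mfn := measurable_funrneg mf.
have fp_le x : `|f^\+ x| <= M := le_trans (funrpos_le_norm f x) (f_le x).
have fn_le x : `|f^\- x| <= M := le_trans (funrneg_le_norm f x) (f_le x).
have -> : (\int[mixture G p]_x (f x)%:E =
    \int[mixture G p]_x (f^\+ x)%:E - \int[mixture G p]_x (f^\- x)%:E)%E.
  by rewrite mixtureE integralE funerpos funerneg.
rewrite (ge0_integral_mixture_bounded mfp fp_le (@funrpos_ge0 _ _ _)).
rewrite (ge0_integral_mixture_bounded mfn fn_le (@funrneg_ge0 _ _ _)).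
have cvg_pos := mixture_series_cvg
  (fun t : S => normr_Rintegral_prob_le (prob_kernel (s := G) t) mfp fp_le)
  w0 w_cvg.
have cvg_neg := mixture_series_cvg
  (fun t : S => normr_Rintegral_prob_le (prob_kernel (s := G) t) mfn fn_le)
  w0 w_cvg.
rewrite -EFinB /mixture_mean -lim_seriesB //.
congr ((limn (series _))%:E); apply/funext => j /=.
rewrite -mulrBr; congr (_ * _).
apply: EFin_inj; rewrite EFinB.
rewrite (EFin_Rintegral_prob (prob_kernel _) mf f_le).
rewrite (EFin_Rintegral_prob (prob_kernel _) mfp fp_le).
rewrite (EFin_Rintegral_prob (prob_kernel _) mfn fn_le).
by rewrite [RHS]integralE funerpos funerneg.
Qed.

End mixture_integral.

Theorem corollary7 (R : realType) (S T : ptopologicalType)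
  (polS : polish R S) (polT : polish R T)
  (G : R.-pker (Borel S) ~> (Borel T))
  (HG : forall (u : nat -> S) (s : S), u @ \oo --> s ->
        forall f : T -> R, bounded_continuous f ->
        (fun n => \int[G (u n)]_x (f x)%:E)%E @ \oo
          --> (\int[G s]_x (f x)%:E)%E) :
  forall f : T -> R, bounded_continuous f ->
    {within [set p : {ptws nat -> S} * {ptws nat -> R} | simplex_inf p.2],
      continuous (fun p : {ptws nat -> S} * {ptws nat -> R} =>
                    (\int[mixture G p]_x (f x)%:E)%E)}.
Proof.
move=> f [f_cont [M f_le]].
have [_ [dist [_ _ _ nbhsE _]]] := polS.
have mf := continuous_Borel_measurable f_cont.
pose h s := \int[G s]_x f x.
have h_le s : `|h s| <= M := normr_Rintegral_prob_le (prob_kernel s) mf f_le.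
have h_cont : continuous h.
  apply: (sequentially_continuous_metric nbhsE) => u s /HG/(_ f).
  move=> /(_ (conj f_cont (ex_intro _ M f_le))).
  rewrite -(EFin_Rintegral_prob (prob_kernel _) mf f_le).
  under eq_fun do rewrite -(EFin_Rintegral_prob (prob_kernel _) mf f_le).
  exact: fine_cvg.
have EFin_mixture_cont :
    {within [set p : {ptws nat -> S} * {ptws nat -> R} | simplex_inf p.2],
      continuous (EFin \o mixture_mean h)}.
  apply: within_continuous_comp (continuous_mixture_mean h_cont h_le).
  by move=> r _; apply: cvg_EFin; [exact: nearW | exact: cvg_id].
apply: subspace_eq_continuous EFin_mixture_cont => p; rewrite inE => pw.
have [w0 _] := pw.
have w_cvg := cvgP _ (simplex_series_cvg pw).
by rewrite /from_subspace /= (integral_mixture G w0 w_cvg mf f_le).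
Qed.
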